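(* Let $G$ be a simple directed graph on $[n]$ and $\tau\subseteq[n]$ a directed clique of $G$. Then there exists a unique $\sigma\subseteq\tau$ such that $\sigma$ is a target-free clique in $G|_\tau$.
   Context: $\tau$ is a directed clique if its nodes can be ordered $1,\dots,|\tau|$ so that $i\to j$ whenever $i<j$. A clique is a nonempty set of nodes pairwise bidirectionally connected. In $G|_\tau$ (the induced subgraph), a target of $\sigma\subseteq\tau$ is a node $k\in\tau\setminus\sigma$ with $i\to k$ for all $i\in\sigma$; target-free means having no target. *)

From mathcomp Require Import all_boot.
Set Implicit Arguments. Unset Strict Implicit. Unset Printing Implicit Defensive.

(* A simple directed graph on [n] = {0,...,n-1}: an edge relation
   [G i j] meaning i -> j, with no self-loops. Bidirectional pairs allowed. *)
Definition simple_digraph (n : nat) (G : rel 'I_n) : Prop :=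
  forall i, ~~ G i i.

Definition directed_clique (n : nat) (G : rel 'I_n) (tau : {set 'I_n}) : Prop :=
  tau != set0 /\
  exists s : seq 'I_n,
    [/\ uniq s, s =i tau &
        forall (x0 : 'I_n) (i j : nat), i < j < size s ->
          G (nth x0 s i) (nth x0 s j)].

Definition clique (n : nat) (G : rel 'I_n) (sigma : {set 'I_n}) : Prop :=
  sigma != set0 /\
  forall i j, i \in sigma -> j \in sigma -> i != j -> G i j && G j i.

(* In G|_tau, a target of sigma (a subset of tau) is a node k in tau \ sigma
   with i -> k for all i in sigma. *)
Definition is_target (n : nat) (G : rel 'I_n) (tau sigma : {set 'I_n}) (k : 'I_n) : Prop :=
  k \in tau :\: sigma /\ forall i, i \in sigma -> G i k.

Definition target_free (n : nat) (G : rel 'I_n) (tau sigma : {set 'I_n}) : Prop :=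
  forall k, ~ is_target G tau sigma k.

From mathcomp Require Import all_boot.
Set Implicit Arguments. Unset Strict Implicit. Unset Printing Implicit Defensive.

(* List tau as v_1, ..., v_m with v_i -> v_j for i < j.  Since v_1 points to
   every other vertex of tau, a target-free clique sigma of tau is determined
   by sigma \ {v_1}, which is a target-free clique of tau \ {v_1}, together
   with the rule that v_1 lies in sigma exactly when every vertex of
   sigma \ {v_1} points to v_1. *)

Section TargetFreeClique.

Variables (n : nat) (G : rel 'I_n).

Definition target_free_clique (tau sigma : {set 'I_n}) : Prop :=
  [/\ sigma \subset tau, clique G sigma & target_free G tau sigma].

Lemma target_free_clique1 (x : 'I_n) (sigma : {set 'I_n}) :
  target_free_clique [set x] sigma <-> sigma = [set x].
Proof.
split=> [[sub [sigma0 _] _] | ->].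
  by move: sub; rewrite subset1 (negPf sigma0) orbF => /eqP.
split=> //; last by move=> k []; rewrite setDv inE.
split=> [|i j /set1P -> /set1P ->]; last by rewrite eqxx.
by apply/set0Pn; exists x; rewrite set11.
Qed.

Section Source.

Variables (x : 'I_n) (T : {set 'I_n}).
Hypotheses (xNT : x \notin T) (T0 : T != set0) (Gx : {in T, forall y, G x y}).

Lemma target_free_cliqueD1 (sigma : {set 'I_n}) :
  target_free_clique (x |: T) sigma -> target_free_clique T (sigma :\ x).
Proof.
case=> sub [_ cl] tf.
have tfD1 : target_free G T (sigma :\ x).
  move=> k [/setDP[kT kND1] Gk]; apply: (tf k); split.
    have kx : k != x by apply: contraNneq xNT => <-.
    by move: kND1; rewrite !inE kx kT orbT => ->.
  move=> i iS; have [-> | ix] := eqVneq i x; first exact: Gx.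
  by apply: Gk; rewrite !inE ix.
split=> //.
- apply/subsetP => y /setD1P[yx yS].
  by move: (subsetP sub y yS); rewrite in_setU1 (negPf yx).
- split=> [|i j /setD1P[_ iS] /setD1P[_ jS]]; last exact: cl.
  (* Otherwise every vertex of the nonempty T is a target of sigma :\ x. *)
  apply/negP => /eqP sigmaD1_0; case/set0Pn: T0 => z zT.
  by apply: (tfD1 z); rewrite sigmaD1_0; split=> [|i]; rewrite ?setD0 ?inE.
Qed.

Lemma source_in_target_free_clique (sigma : {set 'I_n}) :
  target_free_clique (x |: T) sigma ->
  (x \in sigma) = [forall i in sigma :\ x, G i x].
Proof.
case=> _ [_ cl] tf; apply/idP/forall_inP => [xS i /setD1P[ix iS] | Gix].
  by case/andP: (cl i x iS xS ix).
apply/negPn/negP => xNS; apply: (tf x); split; first by rewrite inE xNS setU11.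
move=> i iS; apply: Gix; apply/setD1P; split=> //.
by apply: contraNneq xNS => <-.
Qed.

Definition extend_by_source (sigma : {set 'I_n}) : {set 'I_n} :=
  if [forall i in sigma, G i x] then x |: sigma else sigma.

Lemma target_free_clique_extend (sigma : {set 'I_n}) :
  target_free_clique T sigma ->
  target_free_clique (x |: T) (extend_by_source sigma).
Proof.
case=> sub [sigma0 cl] tf; have inT := subsetP sub.
rewrite /extend_by_source; case: ifP => [/forall_inP Gix | /negbT].
  split; first exact: setUS.
    have Gsx : {in sigma, forall y, G x y && G y x}.
      by move=> y yS; rewrite Gx ?Gix ?inT.
    split=> [|i j]; first by apply/set0Pn; exists x; rewrite setU11.
    move=> /setU1P[-> | iS] /setU1P[-> | jS] ij.
    - by rewrite eqxx in ij.
    - exact: Gsx.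
    - by rewrite andbC Gsx.
    - exact: cl.
  move=> k [/setDP[]]; rewrite !in_setU1 negb_or => kxT /andP[kx kNS] Gk.
  apply: (tf k); split; first by rewrite inE kNS; rewrite (negPf kx) in kxT.
  by move=> i iS; apply: Gk; rewrite in_setU1 iS orbT.
rewrite negb_forall_in => /existsP[i /andP[iS nGix]].
split=> //; first exact: subset_trans sub (subsetU1 x T).
move=> k [/setDP[/setU1P[-> | kT] kNS] Gk]; first by rewrite Gk in nGix.
by apply: (tf k); split=> //; rewrite inE kNS.
Qed.

Lemma target_free_cliqueU1_unique :
  (exists! sigma, target_free_clique T sigma) ->
  exists! sigma, target_free_clique (x |: T) sigma.
Proof.
case=> sigma [sigma_tfc sigma_uniq].
exists (extend_by_source sigma); split; first exact: target_free_clique_extend.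
move=> rho rho_tfc; rewrite (sigma_uniq _ (target_free_cliqueD1 rho_tfc)).
rewrite /extend_by_source -(source_in_target_free_clique rho_tfc).
have [xR | xNR] := boolP (x \in rho); first exact: setD1K.
by apply/setDidPl; rewrite disjoint_sym disjoints1.
Qed.

End Source.

Lemma target_free_clique_seq_unique (s : seq 'I_n) :
  uniq s -> pairwise G s -> s != [::] ->
  exists! sigma, target_free_clique [set:: s] sigma.
Proof.
elim: s => [// | x [| y t] IH].
  move=> _ _ _; rewrite set_seq1; exists [set x].
  by split=> [|rho /target_free_clique1]; [apply/target_free_clique1 |].
move=> /andP[xNyt uniq_yt] /andP[Gxyt pairwise_yt] _.
rewrite set_cons; apply: target_free_cliqueU1_unique.
- by rewrite inE.
- by apply/set0Pn; exists y; rewrite inE mem_head.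
- by move=> z; rewrite inE; apply: (allP Gxyt).
- exact: IH.
Qed.

Lemma directed_clique_seq (tau : {set 'I_n}) :
  directed_clique G tau ->
  exists s, [/\ uniq s, pairwise G s, s != [::] & tau = [set:: s]].
Proof.
case=> tau0 [s [uniq_s s_tau Gs]].
have s0 : s != [::].
  by apply: contraNneq tau0 => s0; apply/eqP/setP => y; rewrite -s_tau s0 inE.
exists s; split=> //; last by apply/setP => y; rewrite inE s_tau.
case: s s0 Gs {uniq_s s_tau} => // x0 s _ Gs.
by apply/(pairwiseP x0) => i j _ jlt ij; apply: Gs; rewrite ij.
Qed.

End TargetFreeClique.

Theorem lemma5 (n : nat) (G : rel 'I_n) (tau : {set 'I_n}) :
  simple_digraph G -> directed_clique G tau ->
  exists! sigma : {set 'I_n},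
    [/\ sigma \subset tau, clique G sigma & target_free G tau sigma].
Proof.
move=> _ /directed_clique_seq[s [uniq_s pairwise_s s0 ->]].
exact: target_free_clique_seq_unique.
Qed.
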